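(* Let $k$ be a field and $\mathcal{R}=\mathrm{RCFM}(k)$. Then: (1) $\mathsf{A}\mathcal{R}=\{\mathsf{R}\in\mathcal{R}: \mathsf{r}_{0j}=0\text{ for all }j\}$; (2) $(\mathsf{I}-\mathsf{A})\mathcal{R}=\{\mathsf{R}\in\mathcal{R}: \sum_{i\in\mathbb{N}_0}\mathsf{r}_{ij}=0\text{ for all }j\}$; (3) $(\mathsf{I}-\mathsf{A}^t)\mathcal{R}=\{\mathsf{R}\in\mathcal{R}: \text{for every }i\in\mathbb{N}_0,\ \sum_{n\ge i}\mathsf{r}_{nj}=0\text{ for all but finitely many }j\}$; (4) $(\mathsf{I}-\mathsf{B}^t)\mathcal{R}=\{\mathsf{R}\in\mathcal{R}: \text{for every }m\in\mathbb{N}_0\text{ and }i\le m,\ \sum_{n\ge m}\mathsf{r}_{i+\frac{n(n+1)}{2},\,j}=0\text{ for all but finitely many }j\}$.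
   Context: $\mathcal{R}=\mathrm{RCFM}(k)$ is the $k$-algebra of $\mathbb{N}_0\times\mathbb{N}_0$ matrices over $k$ with finitely many nonzero entries in each row and each column; $\mathsf{r}_{ij}$ denotes the $(i,j)$ entry of $\mathsf{R}$ (the sums above are finite since columns are finite). $\mathsf{A}$: $\mathsf{a}_{i+1,i}=1$ ($i\in\mathbb{N}_0$), other entries $0$; $\mathsf{B}$: $\mathsf{b}_{\frac{n(n+1)}{2}+i,\frac{(n-1)n}{2}+i}=1$ ($n>0$, $0\le i<n$), other entries $0$; $\mathsf{I}$ is the identity and ${}^t$ transposition. *)

From mathcomp Require Import all_boot all_order all_algebra.
From Stdlib Require Import ClassicalEpsilon.
Set Implicit Arguments. Unset Strict Implicit. Unset Printing Implicit Defensive.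
Import GRing.Theory.
Local Open Scope ring_scope.

Definition nmat (K : fieldType) := nat -> nat -> K.

Definition fin_supp (K : fieldType) (f : nat -> K) : Prop :=
  exists N : nat, forall n : nat, (N <= n)%N -> f n = 0.

(* Sum of a finitely supported sequence (0 if not finitely supported; the
   value does not depend on the chosen bound). *)
Definition fsum (K : fieldType) (f : nat -> K) : K :=
  match excluded_middle_informative (fin_supp f) with
  | left H => \sum_(n < proj1_sig (constructive_indefinite_description _ H)) f n
  | right _ => 0
  end.

Definition rcfm (K : fieldType) (M : nmat K) : Prop :=
  (forall i, fin_supp (fun j => M i j)) /\ (forall j, fin_supp (fun i => M i j)).

Definition mmul (K : fieldType) (X Y : nmat K) : nmat K :=
  fun i j => fsum (fun l => X i l * Y l j).
Definition msub (K : fieldType) (X Y : nmat K) : nmat K := fun i j => X i j - Y i j.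
Definition mtr (K : fieldType) (X : nmat K) : nmat K := fun i j => X j i.

Definition mI (K : fieldType) : nmat K := fun i j => (i == j)%:R.
Definition mA (K : fieldType) : nmat K := fun i j => (i == j.+1)%:R.
(* B : b_{n(n+1)/2 + i, (n-1)n/2 + i} = 1 for n > 0, 0 <= i < n
   (any such n satisfies n <= row index, and n : 'I_m is automatically < m). *)
Definition mB (K : fieldType) : nmat K := fun r c =>
  [exists n : 'I_r.+1, exists i : 'I_n,
     (r == (n * n.+1) %/ 2 + i)%N && (c == (n.-1 * n) %/ 2 + i)%N]%:R.

Definition left_ideal (K : fieldType) (X : nmat K) (R : nmat K) : Prop :=
  exists S : nmat K, rcfm S /\ R = mmul X S.

(* Left multiplication by A shifts rows down, while for a map s with s r > r,
   left multiplication by I - X with X r l = [l = s r] turns S into the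
   difference matrix (S r - S (s r))_r.  Such a difference telescopes:
   R = (I - X) S forces S r = sum_k R (s^k r), a sum that is finite since
   s^k r tends to infinity and the columns of R are finite; row-finiteness of S
   is then exactly the eventual vanishing of these tail sums.  Both A^t
   (s = succ) and B^t (s moves the i-th entry of the n-th triangular block to
   the i-th entry of the next block) are of this form.  For I - A the
   differences run backwards, S is recovered by partial column sums of R, and
   its column-finiteness is the vanishing of the full column sums. *)
From mathcomp Require Import all_boot all_order all_algebra zify.
From Stdlib Require Import FunctionalExtensionality ClassicalEpsilon.
Set Implicit Arguments. Unset Strict Implicit. Unset Printing Implicit Defensive.
Import GRing.Theory.

Definition tri n := (n * n.+1) %/ 2.

Lemma triS n : tri n.+1 = tri n + n.+1.
Proof. rewrite /tri; lia. Qed.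

Lemma leq_tri : {homo tri : m n / m <= n}.
Proof. by apply: (homo_leq leqnn leq_trans) => n; rewrite triS leq_addr. Qed.

Lemma leq_id_tri n : n <= tri n.
Proof. by case: n => // n; rewrite triS leq_addl. Qed.

Lemma tri_addn_inj m n p q : p <= m -> q <= n -> tri m + p = tri n + q ->
  m = n /\ p = q.
Proof.
have lt_tri a b x : x <= a -> a < b -> tri a + x < tri b.
  move=> xa ab; apply: leq_trans (leq_tri ab); rewrite triS; lia.
move=> pm qn E; case: (ltngtP m n) => [mn | nm | mn].
- by have := lt_tri _ _ _ pm mn; rewrite E ltnNge leq_addr.
- by have := lt_tri _ _ _ qn nm; rewrite -E ltnNge leq_addr.
- by subst n; split=> //; move: E => /eqP; rewrite eqn_add2l => /eqP.
Qed.

Fixpoint tri_decomp r : nat * nat :=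
  if r is r'.+1 then
    let: (m, p) := tri_decomp r' in if p < m then (m, p.+1) else (m.+1, 0)
  else (0, 0).

Lemma tri_decomp_spec r :
  (tri_decomp r).2 <= (tri_decomp r).1 /\ r = tri (tri_decomp r).1 + (tri_decomp r).2.
Proof.
elim: r => [//|r] /=; case: (tri_decomp r) => m p /= [pm ->].
by case: ltnP => [pm' | mp] /=; split=> //; rewrite ?triS; lia.
Qed.

Lemma tri_decompE m p : p <= m -> tri_decomp (tri m + p) = (m, p).
Proof.
move=> pm; have := tri_decomp_spec (tri m + p).
by case: (tri_decomp _) => a b /= [ba /esym/(tri_addn_inj ba pm)[-> ->]].
Qed.

(* The column of the unique 1 in row r of B^t. *)
Definition succB r := (r + (tri_decomp r).1).+1.

Lemma ltn_succB r : r < succB r.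
Proof. by rewrite ltnS leq_addr. Qed.

Lemma succB_tri m p : p <= m -> succB (tri m + p) = tri m.+1 + p.
Proof. by move=> pm; rewrite /succB tri_decompE //= triS; lia. Qed.

Lemma iter_succB k m p : p <= m -> iter k succB (tri m + p) = tri (m + k) + p.
Proof.
move=> pm; elim: k => [|k IH]; first by rewrite addn0.
by rewrite iterS IH succB_tri ?addnS //; exact: leq_trans pm (leq_addr k m).
Qed.

Local Open Scope ring_scope.

Section FiniteSupport.
Variable K : fieldType.
Implicit Types f g : nat -> K.

Lemma fin_supp_map2 (op : K -> K -> K) f g : op 0 0 = 0 ->
  fin_supp f -> fin_supp g -> fin_supp (fun n => op (f n) (g n)).
Proof.
move=> op00 [M fM] [N gN]; exists (maxn M N) => n.
by rewrite geq_max => /andP[/fM-> /gN->].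
Qed.

Lemma fin_suppB f g : fin_supp f -> fin_supp g -> fin_supp (fun n => f n - g n).
Proof. exact: (fin_supp_map2 (op := fun x y => x - y)) (subr0 0). Qed.

Lemma fin_suppMr f g : fin_supp f -> fin_supp (fun n => f n * g n).
Proof. by case=> N fN; exists N => n /fN->; rewrite mul0r. Qed.

Lemma fin_supp_delta f a : (forall n, n != a -> f n = 0) -> fin_supp f.
Proof. by move=> fa; exists a.+1 => n an; apply: fa; rewrite neq_ltn an orbT. Qed.

Lemma fin_supp_comp f (t : nat -> nat) : (forall n, (n <= t n)%N) ->
  fin_supp f -> fin_supp (fun n => f (t n)).
Proof. by move=> tn [N fN]; exists N => n Nn; apply: fN; exact: leq_trans (tn n). Qed.

Lemma fin_supp_pred f : fin_supp f -> fin_supp (fun n => if n is k.+1 then f k else 0).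
Proof. by case=> N fN; exists N.+1 => -[|n] // /fN. Qed.

Lemma fin_supp_sum (F : nat -> nat -> K) m : (forall i, fin_supp (F i)) ->
  fin_supp (fun j => \sum_(i < m) F i j).
Proof.
move=> FP; elim: m => [|m IH]; first by exists 0%N => j _; rewrite big_ord0.
have -> : (fun j => \sum_(i < m.+1) F i j) = fun j => \sum_(i < m) F i j + F m j.
  by apply: functional_extensionality => j; rewrite big_ord_recr.
exact: (fin_supp_map2 (op := +%R)) (addr0 0) IH (FP m).
Qed.

Lemma sum_ord_supp f M N : (M <= N)%N -> (forall n, (M <= n)%N -> f n = 0) ->
  \sum_(n < N) f n = \sum_(n < M) f n.
Proof.
move=> MN fM; elim: N MN => [|N IH]; first by rewrite leqn0 => /eqP->.
rewrite leq_eqVlt ltnS => /orP[/eqP<- // | MN].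
by rewrite big_ord_recr /= IH // fM // addr0.
Qed.

Lemma fsumE f N : (forall n, (N <= n)%N -> f n = 0) -> fsum f = \sum_(n < N) f n.
Proof.
move=> fN; rewrite /fsum; case: excluded_middle_informative => [fP|]; last first.
  by case; exists N.
case: (constructive_indefinite_description _ fP) => M fM /=.
by case: (leqP M N) => [/sum_ord_supp-> | /ltnW/sum_ord_supp->].
Qed.

Lemma fsum0 f : (forall n, f n = 0) -> fsum f = 0.
Proof. by move=> f0; rewrite (@fsumE f 0) ?big_ord0. Qed.

Lemma fsum_delta f a : (forall n, n != a -> f n = 0) -> fsum f = f a.
Proof.
move=> fa; rewrite (@fsumE f a.+1); last by move=> n an; apply: fa; rewrite neq_ltn an orbT.
by rewrite big_ord_recr /= big1 ?add0r // => i _; apply: fa; rewrite neq_ltn ltn_ord.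
Qed.

Lemma fsumB f g : fin_supp f -> fin_supp g ->
  fsum (fun n => f n - g n) = fsum f - fsum g.
Proof.
move=> [M fM] [N gN]; set L := maxn M N.
have [fL gL] : (forall n, (L <= n)%N -> f n = 0) /\ (forall n, (L <= n)%N -> g n = 0).
  by split=> n; rewrite geq_max => /andP[]; auto.
rewrite (fsumE fL) (fsumE gL) -sumrB; apply: fsumE => n Ln.
by rewrite fL // gL // subr0.
Qed.

Lemma fsum_recl f : fin_supp f -> fsum f = f 0%N + fsum (fun k => f k.+1).
Proof.
case=> N fN; rewrite (@fsumE f N.+1) => [|n /ltnW/fN //].
by rewrite (@fsumE _ N) => [|n /leqW/fN //]; rewrite big_ord_recl.
Qed.

Lemma fsum_telescope f : fin_supp f -> fsum (fun k => f k - f k.+1) = f 0%N.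
Proof.
move=> fP; rewrite fsumB ?(fsum_recl fP) ?addrK //.
exact: fin_supp_comp leqnSn fP.
Qed.

Lemma fsum_drop f i : fin_supp f ->
  fsum (fun n => if (i <= n)%N then f n else 0) = fsum (fun k => f (i + k)%N).
Proof.
elim: i f => [|i IH] f fP; first by congr fsum; apply: functional_extensionality.
rewrite fsum_recl /=; last by case: fP => N fN; exists N => n /fN->; case: ifP.
rewrite add0r -(IH (fun k => f k.+1)); last exact: fin_supp_comp fP.
by congr fsum; apply: functional_extensionality => n; rewrite ltnS.
Qed.

End FiniteSupport.

Section Products.
Variable K : fieldType.
Implicit Types X Y S : nmat K.

Lemma mmul_delta X S a r j : (forall l, l != a -> X r l = 0) ->
  mmul X S r j = X r a * S a j.
Proof. by move=> Xa; rewrite /mmul (fsum_delta (a := a)) // => l /Xa->; rewrite mul0r. Qed.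

Lemma mmulBl X Y S : (forall r, fin_supp (X r)) -> (forall r, fin_supp (Y r)) ->
  mmul (msub X Y) S = msub (mmul X S) (mmul Y S).
Proof.
move=> XP YP; do 2 apply: functional_extensionality => ?.
rewrite /mmul /msub -fsumB; try exact: fin_suppMr.
by congr fsum; apply: functional_extensionality => l; rewrite mulrBl.
Qed.

Definition shift_mx (s : nat -> nat) : nmat K := fun r l => (l == s r)%:R.

Lemma shift_mx_delta s r l : l != s r -> shift_mx s r l = 0.
Proof. by rewrite /shift_mx => /negbTE->. Qed.

Lemma mI_delta r l : l != r -> mI K r l = 0.
Proof. by rewrite /mI eq_sym => /negbTE->. Qed.

Lemma mA_delta r l : l != r.-1 -> mA K r l = 0.
Proof. by rewrite /mA; case: (r =P l.+1) => // ->; rewrite eqxx. Qed.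

Lemma mmul1 S : mmul (mI K) S = S.
Proof.
do 2 apply: functional_extensionality => ?.
by rewrite (mmul_delta _ _ (@mI_delta _)) /mI eqxx mul1r.
Qed.

Lemma mmul_shift_mx s S : mmul (shift_mx s) S = fun r j => S (s r) j.
Proof.
do 2 apply: functional_extensionality => ?.
by rewrite (mmul_delta _ _ (@shift_mx_delta _ _)) /shift_mx eqxx mul1r.
Qed.

Lemma mmul_mA S : mmul (mA K) S = fun i j => if i is k.+1 then S k j else 0.
Proof.
apply: functional_extensionality => i; apply: functional_extensionality => j.
by rewrite (mmul_delta _ _ (@mA_delta _)) /mA; case: i => [|k]; rewrite ?eqxx ?mul1r ?mul0r.
Qed.

Lemma mmul_subI_shift_mx s S :
  mmul (msub (mI K) (shift_mx s)) S = fun r j => S r j - S (s r) j.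
Proof.
rewrite mmulBl ?mmul1 ?mmul_shift_mx // => r.
  exact: fin_supp_delta (@mI_delta r).
exact: fin_supp_delta (@shift_mx_delta s r).
Qed.

Lemma mmul_subI_mA S :
  mmul (msub (mI K) (mA K)) S = fun i j => S i j - if i is k.+1 then S k j else 0.
Proof.
rewrite mmulBl ?mmul1 ?mmul_mA // => r.
  exact: fin_supp_delta (@mI_delta r).
exact: fin_supp_delta (@mA_delta r).
Qed.

End Products.

Section LeftIdeals.
Variable K : fieldType.
Implicit Types R S : nmat K.

Lemma left_ideal_mA R : left_ideal (mA K) R <-> rcfm R /\ forall j, R 0%N j = 0.
Proof.
split=> [[S [[Srow Scol] ->]] | [[Rrow Rcol] R0]].
  rewrite mmul_mA; split=> //; split=> [[|i] | j]; [by exists 0%N | exact: Srow |].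
  exact: fin_supp_pred (Scol j).
exists (fun i j => R i.+1 j); split.
  by split=> [i | j]; [exact: Rrow | exact: fin_supp_comp leqnSn (Rcol j)].
rewrite mmul_mA; apply: functional_extensionality => -[|i] //.
by apply: functional_extensionality => j; exact: R0.
Qed.

Lemma left_ideal_subI_mA R : left_ideal (msub (mI K) (mA K)) R <->
  rcfm R /\ forall j, fsum (fun i => R i j) = 0.
Proof.
split=> [[S [[Srow Scol] ->]] | [[Rrow Rcol] Rsum]].
  have Sprev j := fin_supp_pred (Scol j).
  rewrite mmul_subI_mA; split; first split=> [[|i] | j].
  - by apply: fin_suppB (Srow 0%N) _; exists 0%N.
  - exact: fin_suppB (Srow i.+1) (Srow i).
  - exact: fin_suppB (Scol j) (Sprev j).
  by move=> j; rewrite fsumB // (fsum_recl (Sprev j)) add0r subrr.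
exists (fun i j => \sum_(n < i.+1) R n j); split; first split=> [i | j].
- exact: fin_supp_sum.
- have [N RN] := Rcol j; exists N => i Ni.
  rewrite -(@fsumE _ (fun n => R n j)) // => n i_n; apply: RN.
  exact: leq_trans Ni (ltnW i_n).
rewrite mmul_subI_mA; apply: functional_extensionality => i.
apply: functional_extensionality => j; case: i => [|i].
  by rewrite big_ord1 subr0.
by rewrite big_ord_recr /= addrAC subrr add0r.
Qed.

Lemma leq_addn_iter (s : nat -> nat) : (forall r, (r < s r)%N) ->
  forall k r, (k + r <= iter k s r)%N.
Proof.
move=> s_gt; elim=> [//|k IH] r; rewrite iterS.
exact: leq_ltn_trans (IH r) (s_gt _).
Qed.

Lemma left_ideal_subI_shift_mx (s : nat -> nat) R : (forall r, (r < s r)%N) ->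
  left_ideal (msub (mI K) (shift_mx K s)) R <->
  rcfm R /\ forall r, exists J, forall j, (J <= j)%N ->
    fsum (fun k => R (iter k s r) j) = 0.
Proof.
move=> s_gt; have iter_ge := leq_addn_iter s_gt.
have orbit_supp (T : nmat K) r j : fin_supp (fun i => T i j) ->
    fin_supp (fun k => T (iter k s r) j).
  by move=> TP; apply: fin_supp_comp TP => k; exact: leq_trans (leq_addr r k) (iter_ge k r).
split=> [[S [[Srow Scol] ->]] | [[Rrow Rcol] Rtail]].
  rewrite mmul_subI_shift_mx; split; first split=> [r | j].
  - exact: fin_suppB (Srow r) (Srow (s r)).
  - have [N SN] := Scol j; exists N => r Nr.
    by rewrite !SN ?subr0 //; exact: leq_trans Nr (ltnW (s_gt r)).
  move=> r; have [J SJ] := Srow r; exists J => j Jj.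
  by rewrite (fsum_telescope (orbit_supp _ r j (Scol j))) SJ.
exists (fun r j => fsum (fun k => R (iter k s r) j)); split; first split=> [r | j].
- by have [J RJ] := Rtail r; exists J.
- have [N RN] := Rcol j; exists N => r Nr; apply: fsum0 => k; apply: RN.
  by rewrite (leq_trans Nr) // (leq_trans (leq_addl k r)).
rewrite mmul_subI_shift_mx; apply: functional_extensionality => r.
apply: functional_extensionality => j; rewrite (fsum_recl (orbit_supp _ r j (Rcol j))) /=.
suff -> : (fun k => R (iter k s (s r)) j) = fun k => R (iter k.+1 s r) j by rewrite addrK.
by apply: functional_extensionality => k; rewrite iterSr.
Qed.

End LeftIdeals.

Section Transposes.
Variable K : fieldType.

Lemma mtr_mA : mtr (mA K) = shift_mx K succn.
Proof. by do 2 apply: functional_extensionality => ?; rewrite /mtr /mA /shift_mx. Qed.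

Lemma mB_succB l r : mB K l r = (l == succB r)%:R.
Proof.
rewrite /mB; congr (nat_of_bool _)%:R.
apply/existsP/eqP => [[n /existsP[i /andP[/eqP l_eq /eqP r_eq]]] | ->].
  rewrite {}l_eq {}r_eq; case: n i => -[|n] _ [i] //= i_lt.
  by rewrite -[((n * n.+1) %/ 2)%N]/(tri n) succB_tri.
have [pm ->] := tri_decomp_spec r; set m := _.1; set p := _.2.
rewrite succB_tri //.
have m_lt : (m.+1 < (tri m.+1 + p).+1)%N by rewrite ltnS (leq_trans (leq_id_tri _)) ?leq_addr.
have p_lt : (p < m.+1)%N by [].
by exists (Ordinal m_lt); apply/existsP; exists (Ordinal p_lt); rewrite /= !eqxx.
Qed.

Lemma mtr_mB : mtr (mB K) = shift_mx K succB.
Proof. by do 2 apply: functional_extensionality => ?; rewrite /mtr mB_succB. Qed.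

End Transposes.

Section TailSums.
Variable K : fieldType.
Implicit Types R : nmat K.

Lemma left_ideal_subI_mtrA R : left_ideal (msub (mI K) (mtr (mA K))) R <->
  rcfm R /\ forall i, exists J, forall j, (J <= j)%N ->
    fsum (fun n => if (i <= n)%N then R n j else 0) = 0.
Proof.
rewrite mtr_mA left_ideal_subI_shift_mx //.
have tailE (RP : rcfm R) i j :
    fsum (fun n => if (i <= n)%N then R n j else 0) = fsum (fun k => R (iter k succn i) j).
  rewrite fsum_drop; last exact: RP.2 j.
  by congr fsum; apply: functional_extensionality => k; rewrite iter_succn.
split=> -[RP tail]; split=> // i; have [J JP] := tail i.
  by exists J => j /JP; rewrite tailE.
by exists J => j /JP; rewrite tailE.
Qed.

Lemma left_ideal_subI_mtrB R : left_ideal (msub (mI K) (mtr (mB K))) R <->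
  rcfm R /\ forall m i, (i <= m)%N -> exists J, forall j, (J <= j)%N ->
    fsum (fun n => if (m <= n)%N then R (i + (n * n.+1) %/ 2)%N j else 0) = 0.
Proof.
rewrite mtr_mB left_ideal_subI_shift_mx; last exact: ltn_succB.
have tailE (RP : rcfm R) m i j : (i <= m)%N ->
    fsum (fun n => if (m <= n)%N then R (i + tri n)%N j else 0) =
    fsum (fun k => R (iter k succB (tri m + i)%N) j).
  move=> im; rewrite fsum_drop; last first.
    apply: (fin_supp_comp (f := fun x => R x j) (t := fun n => i + tri n)%N) (RP.2 j).
    by move=> n; rewrite (leq_trans (leq_id_tri n)) ?leq_addl.
  by congr fsum; apply: functional_extensionality => k; rewrite iter_succB // addnC.
split=> -[RP tail]; split=> //.
  move=> m i im; have [J JP] := tail (tri m + i)%N.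
  by exists J => j /JP; rewrite tailE.
move=> r; have [im r_eq] := tri_decomp_spec r.
have [J JP] := tail _ _ im.
by exists J => j /JP; rewrite tailE // -r_eq.
Qed.

End TailSums.

Theorem lemmaA2 (K : fieldType) :
  (forall R : nmat K,
     left_ideal (mA K) R <-> (rcfm R /\ forall j, R 0%N j = 0)) /\
  (forall R : nmat K,
     left_ideal (msub (mI K) (mA K)) R <->
     (rcfm R /\ forall j, fsum (fun i => R i j) = 0)) /\
  (forall R : nmat K,
     left_ideal (msub (mI K) (mtr (mA K))) R <->
     (rcfm R /\ forall i : nat, exists J : nat, forall j : nat, (J <= j)%N ->
        fsum (fun n => if (i <= n)%N then R n j else 0) = 0)) /\
  (forall R : nmat K,
     left_ideal (msub (mI K) (mtr (mB K))) R <->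
     (rcfm R /\ forall m i : nat, (i <= m)%N -> exists J : nat, forall j : nat, (J <= j)%N ->
        fsum (fun n => if (m <= n)%N then R (i + (n * n.+1) %/ 2)%N j else 0) = 0)).
Proof.
split; first exact: left_ideal_mA.
split; first exact: left_ideal_subI_mA.
split; first exact: left_ideal_subI_mtrA.
exact: left_ideal_subI_mtrB.
Qed.
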